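(* Assume $z_1-z_2+z_3-z_4=0$. Then for each phase $\ell\in\{w,\textit{nw}\}$, each $k\in\{1,\dots,4\}$ and each $j\in\{1,\dots,4\}$ with $j\ne k$, $$\frac{\partial\big(\overline{G}_{\ell,k+1/2}-\overline{G}_{\ell,k-1/2}\big)}{\partial S_{\ell,j}}\le0 .$$
   Context: An interaction region has four vertices labeled $k\in\{1,2,3,4\}$ counterclockwise; indices are cyclic mod 4. Vertex $k$ has depth $z_k\in\mathbb{R}$ and wetting saturation $S_k$; $S_{w,k}=S_k$, $S_{\textit{nw},k}=1-S_k$, so $\partial/\partial S_{\textit{nw},j}=-\partial/\partial S_j$. Half-interface $k+1/2$ joins vertices $k$ and $k+1$, with transmissibility $\overline{T}_{k+1/2}>0$ and $\overline{\Delta z}_{k+1/2}=z_{k+1}-z_k$. Two phases $w,\textit{nw}$ with constant densities $\rho_w,\rho_{\textit{nw}}$; $g>0$. Mobilities $\lambda_w,\lambda_{\textit{nw}}$ are positive differentiable functions of $S$, $\lambda_w$ nondecreasing and $\lambda_{\textit{nw}}$ nonincreasing in $S$; $\lambda_{\ell,k}=\lambda_\ell(S_k)$. $H(a,b)=ab/(a+b)$. Limiter $\varphi(r)=\dfrac{r^4+r^3+r^2+r}{r^4+r^3+r^2+r+1}$, $r\ge0$. Weights: $\overline{\omega}^G_{k+1/2}=\varphi\big(\overline{T}_{k+3/2}\overline{\Delta z}_{k+3/2}/(\overline{T}_{k+1/2}\overline{\Delta z}_{k+1/2})\big)$ if $\overline{\Delta z}_{k+1/2}\overline{\Delta z}_{k+3/2}>0$;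 $=\varphi\big(\overline{T}_{k-1/2}\overline{\Delta z}_{k-1/2}/(\overline{T}_{k+1/2}\overline{\Delta z}_{k+1/2})\big)$ if $\overline{\Delta z}_{k+1/2}\overline{\Delta z}_{k-1/2}>0$; $=0$ otherwise. For an ordered pair $(\ell,m)$ of the two distinct phases with $(\rho_\ell-\rho_m)\overline{\Delta z}_{k+1/2}>0$, writing $\omega=\overline{\omega}^G_{k+1/2}$: $\overline{\psi}_{\ell,m,k+1/2}=(1-\omega)H(\lambda_{\ell,k},\lambda_{m,k+1})+\omega H(\lambda_{\ell,k},\lambda_{m,k+2})$ if $\overline{\Delta z}_{k+1/2}\overline{\Delta z}_{k+3/2}>0$; $=(1-\omega)H(\lambda_{\ell,k},\lambda_{m,k+1})+\omega H(\lambda_{\ell,k-1},\lambda_{m,k+1})$ if $\overline{\Delta z}_{k+1/2}\overline{\Delta z}_{k-1/2}>0$; $=H(\lambda_{\ell,k},\lambda_{m,k+1})$ otherwise. If $(\rho_\ell-\rho_m)\overline{\Delta z}_{k+1/2}<0$, $\overline{\psi}_{\ell,m,k+1/2}$ is given by the same formulas with $\ell$ and $m$ interchanged; if $(\rho_\ell-\rho_m)\overline{\Delta z}_{k+1/2}=0$, set $\overline{\psi}_{\ell,m,k+1/2}=0$. Buoyancy flux of phase $\ell$ at half-interface $k+1/2$: $\overline{G}_{\ell,k+1/2}=\overline{T}_{k+1/2}\,\overline{\psi}_{\ell,m,k+1/2}\,(\rho_\ell-\rho_m)\,g\,\overline{\Delta z}_{k+1/2}$, where $m$ is the other phase. *)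

From Stdlib Require Import Reals Lra Lia Arith.
Open Scope R_scope.

(* Vertices are indexed 0..3 (paper's vertex k+1 is our k); indices cyclic mod 4.
   Half-interface k+1/2 (joining vertices k, k+1) is indexed by k;
   half-interface k-1/2 is therefore index k+3 (mod 4). *)
Definition vx (k : nat) : nat := Nat.modulo k 4.

Inductive phase : Set := w | nw.
Definition other (l : phase) : phase := match l with w => nw | nw => w end.

Definition Hm (a b : R) : R := a * b / (a + b).

Definition phi (r : R) : R :=
  (r^4 + r^3 + r^2 + r) / (r^4 + r^3 + r^2 + r + 1).

Section Defs.
Variables (z : nat -> R) (T : nat -> R).
(* z k : depth of vertex k ; T k : transmissibility of half-interface k+1/2 *)

Definition dz (k : nat) : R := z (vx (k + 1)) - z (vx k).
Definition Tb (k : nat) : R := T (vx k).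

Definition omegaG (k : nat) : R :=
  if Rlt_dec 0 (dz k * dz (k + 1)) then
    phi (Tb (k + 1) * dz (k + 1) / (Tb k * dz k))
  else if Rlt_dec 0 (dz k * dz (k + 3)) then
    phi (Tb (k + 3) * dz (k + 3) / (Tb k * dz k))
  else 0.

Variables (rho : phase -> R) (g : R) (lam : phase -> R -> R) (S : nat -> R).
(* lam l s : mobility of phase l at wetting saturation s;
   lambda_{l,k} = lam l (S k) *)
Definition lamv (l : phase) (k : nat) : R := lam l (S (vx k)).

Definition psi_base (a b : phase) (k : nat) : R :=
  let om := omegaG k in
  if Rlt_dec 0 (dz k * dz (k + 1)) then
    (1 - om) * Hm (lamv a k) (lamv b (k + 1)) + om * Hm (lamv a k) (lamv b (k + 2))
  else if Rlt_dec 0 (dz k * dz (k + 3)) then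
    (1 - om) * Hm (lamv a k) (lamv b (k + 1)) + om * Hm (lamv a (k + 3)) (lamv b (k + 1))
  else Hm (lamv a k) (lamv b (k + 1)).

Definition psi (l m : phase) (k : nat) : R :=
  if Rlt_dec 0 ((rho l - rho m) * dz k) then psi_base l m k
  else if Rlt_dec ((rho l - rho m) * dz k) 0 then psi_base m l k
  else 0.

Definition Gflux (l : phase) (k : nat) : R :=
  Tb k * psi l (other l) k * (rho l - rho (other l)) * g * dz k.

Definition Gdiff (l : phase) (k : nat) : R := Gflux l k - Gflux l (k + 3).

End Defs.

Definition upd (S : nat -> R) (j : nat) (t : R) : nat -> R :=
  fun i => if Nat.eqb i j then t else S i.

(* phase-l saturation from wetting saturation (an involution):
   S_w = S, S_nw = 1 - S *)
Definition satl (l : phase) (s : R) : R :=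
  match l with w => s | nw => 1 - s end.

From Stdlib Require Import Reals Lra Lia.
Open Scope R_scope.

(* Changing [S_(l,j)] with [j <> k] raises the l-mobility and lowers the other mobility at
   vertex [j] only, so it suffices to show that [Gdiff] is antitone under such a change; the
   sign of the derivative then follows from the mean value theorem.  Each flux is a nonnegative
   combination of terms [(rho_l - rho_m) dz H(lambda_c, lambda_d)] with [c] the upwind phase,
   which increase with the upwind mobility and decrease with the downwind one.  If [dz_(k+1/2)]
   and [dz_(k-1/2)] do not have the same sign, vertex [k] is only the upwind vertex of
   [G_(k+1/2)] and the downwind vertex of [G_(k-1/2)], and [j] sits in the other slots.
   Otherwise [z_1 - z_2 + z_3 - z_4 = 0] forces [dz_(k+3/2) = - dz_(k-1/2)], both fluxes use
   the stencil [H(lambda_(k-1), lambda_(k+1))], and since [phi r = r phi (1/r)] its two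
   weights [T dz omega] agree, so that term cancels in the difference. *)

Lemma phi_mul_inv x : 0 < x -> phi x = x * phi (/ x).
Proof.
  intro Hx. unfold phi.
  assert (0 < x ^ 4) by (apply pow_lt; lra).
  assert (0 < x ^ 3) by (apply pow_lt; lra).
  assert (0 < x ^ 2) by (apply pow_lt; lra).
  field; lra.
Qed.

Lemma phi_bounds x : 0 < x -> 0 <= phi x <= 1.
Proof.
  intro Hx. unfold phi.
  assert (HN : 0 < x ^ 4 + x ^ 3 + x ^ 2 + x)
    by (assert (0 < x ^ 4) by (apply pow_lt; lra);
        assert (0 < x ^ 3) by (apply pow_lt; lra);
        assert (0 < x ^ 2) by (apply pow_lt; lra); lra).
  set (N := x ^ 4 + x ^ 3 + x ^ 2 + x) in *.
  split.
  - apply Rlt_le, Rdiv_lt_0_compat; lra.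
  - apply (Rmult_le_reg_r (N + 1)); [lra |].
    unfold Rdiv; rewrite Rmult_assoc, Rinv_l; lra.
Qed.

Lemma phi_balance A B : 0 < A * B -> A * phi (B / A) = B * phi (A / B).
Proof.
  intro HAB.
  assert (HA : A <> 0) by (intro E; rewrite E in HAB; lra).
  assert (HBA : 0 < B / A).
  { replace (B / A) with (A * B / (A * A)) by (field; exact HA).
    apply Rdiv_lt_0_compat; [exact HAB | nra]. }
  rewrite (phi_mul_inv _ HBA).
  replace (/ (B / A)) with (A / B) by (field; split; [exact HA | nra]).
  field; exact HA.
Qed.

Lemma Hm_le_compat a b a' b' :
  0 < a -> 0 < b -> a <= a' -> b <= b' -> Hm a b <= Hm a' b'.
Proof.
  intros. unfold Hm.
  replace (a * b / (a + b)) with (/ (/ a + / b)) by (field; lra).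
  replace (a' * b' / (a' + b')) with (/ (/ a' + / b')) by (field; lra).
  assert (0 < / a') by (apply Rinv_0_lt_compat; lra).
  assert (0 < / b') by (apply Rinv_0_lt_compat; lra).
  apply Rinv_le_contravar; [lra |].
  apply Rplus_le_compat; apply Rinv_le_contravar; lra.
Qed.

Lemma vx_lt n : (vx n < 4)%nat.
Proof. apply Nat.mod_upper_bound; lia. Qed.

Lemma vx_id n : (n < 4)%nat -> vx n = n.
Proof. apply Nat.mod_small. Qed.

Lemma vx_add4 n : vx (n + 4) = vx n.
Proof. unfold vx; rewrite Nat.Div0.add_mod, Nat.Div0.mod_same, Nat.add_0_r; apply Nat.Div0.mod_mod. Qed.

Lemma dz_add4 z n : dz z (n + 4) = dz z n.
Proof. unfold dz; rewrite <- Nat.add_shuffle0, !vx_add4; reflexivity. Qed.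

Lemma Tb_add4 T n : Tb T (n + 4) = Tb T n.
Proof. unfold Tb; rewrite vx_add4; reflexivity. Qed.

Lemma lamv_add4 lam S p n : lamv lam S p (n + 4) = lamv lam S p n.
Proof. unfold lamv; rewrite vx_add4; reflexivity. Qed.

Lemma Tb_pos T n : (forall k, (k < 4)%nat -> 0 < T k) -> 0 < Tb T n.
Proof. intro HT; apply HT, vx_lt. Qed.

Lemma omegaG_bounds z T n :
  (forall k, (k < 4)%nat -> 0 < T k) -> 0 <= omegaG z T n <= 1.
Proof.
  intro HT.
  assert (Hratio : forall m, 0 < dz z n * dz z m -> 0 < Tb T m * dz z m / (Tb T n * dz z n)).
  { intros m Hm.
    pose proof (Tb_pos T n HT); pose proof (Tb_pos T m HT).
    assert (Hn : dz z n <> 0) by (intro E; rewrite E in Hm; lra).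
    replace (Tb T m * dz z m / (Tb T n * dz z n))
      with (Tb T m * (dz z n * dz z m) / (Tb T n * (dz z n * dz z n)))
      by (field; split; lra).
    apply Rdiv_lt_0_compat; apply Rmult_lt_0_compat; nra. }
  unfold omegaG.
  destruct (Rlt_dec 0 (dz z n * dz z (n + 1))); [apply phi_bounds; auto |].
  destruct (Rlt_dec 0 (dz z n * dz z (n + 3))); [apply phi_bounds; auto | lra].
Qed.

Lemma omegaG_balance z T k :
  (forall i, (i < 4)%nat -> 0 < T i) ->
  ~ 0 < dz z k * dz z (k + 1) -> 0 < dz z k * dz z (k + 3) ->
  Tb T k * dz z k * omegaG z T k = Tb T (k + 3) * dz z (k + 3) * omegaG z T (k + 3).
Proof.
  intros HT H1 H3.
  assert (E : (k + 3 + 1 = k + 4)%nat) by lia.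
  unfold omegaG; rewrite E, dz_add4, Tb_add4, (Rmult_comm (dz z (k + 3))).
  destruct (Rlt_dec 0 (dz z k * dz z (k + 1))); [contradiction |].
  destruct (Rlt_dec 0 (dz z k * dz z (k + 3))); [| contradiction].
  apply phi_balance.
  pose proof (Tb_pos T k HT); pose proof (Tb_pos T (k + 3) HT).
  replace (Tb T k * dz z k * (Tb T (k + 3) * dz z (k + 3)))
    with (Tb T k * Tb T (k + 3) * (dz z k * dz z (k + 3))) by ring.
  apply Rmult_lt_0_compat; [apply Rmult_lt_0_compat |]; assumption.
Qed.

Lemma derivable_fun_plus f h : derivable f -> derivable h -> derivable (fun u => f u + h u).
Proof. exact (derivable_plus f h). Qed.

Lemma derivable_fun_minus f h : derivable f -> derivable h -> derivable (fun u => f u - h u).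
Proof. exact (derivable_minus f h). Qed.

Lemma derivable_fun_mult f h : derivable f -> derivable h -> derivable (fun u => f u * h u).
Proof. exact (derivable_mult f h). Qed.

Lemma derivable_Hm f h :
  derivable f -> derivable h -> (forall u, 0 < f u) -> (forall u, 0 < h u) ->
  derivable (fun u => Hm (f u) (h u)).
Proof.
  intros Hf Hh Pf Pg.
  apply (derivable_div (mult_fct f h) (plus_fct f h)).
  - apply derivable_mult; assumption.
  - apply derivable_plus; assumption.
  - intro x; unfold plus_fct; specialize (Pf x); specialize (Pg x); lra.
Qed.

Lemma derivable_lamv_upd (lam : phase -> R -> R) S j l p i :
  (forall q, derivable (lam q)) ->
  derivable (fun u => lamv lam (upd S j (satl l u)) p i).
Proof.
  intro Hd. unfold lamv, upd.
  destruct (Nat.eqb (vx i) j); [| apply derivable_const].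
  destruct l; [apply Hd |].
  apply (derivable_comp (fun u => 1 - u) (lam p)); [| apply Hd].
  apply derivable_fun_minus; [apply derivable_const | apply derivable_id].
Qed.

Lemma derivable_Gdiff_upd z T rho g (lam : phase -> R -> R) S j l k :
  (forall p, derivable (lam p)) -> (forall p s, 0 < lam p s) ->
  derivable (fun u => Gdiff z T rho g lam (upd S j (satl l u)) l k).
Proof.
  intros Hd Hp.
  unfold Gdiff, Gflux, psi, psi_base; cbv zeta.
  repeat match goal with |- context [Rlt_dec ?a ?b] => destruct (Rlt_dec a b) end;
  repeat first [ apply derivable_const | apply derivable_Hm | apply derivable_fun_minus
               | apply derivable_fun_plus | apply derivable_fun_mult
               | apply derivable_lamv_upd; exact Hd | intro; apply Hp ].
Qed.

Lemma lam_satl_le (lam : phase -> R -> R) l u1 u2 :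
  (forall s1 s2, s1 <= s2 -> lam w s1 <= lam w s2) ->
  (forall s1 s2, s1 <= s2 -> lam nw s2 <= lam nw s1) ->
  u1 <= u2 -> lam l (satl l u1) <= lam l (satl l u2).
Proof. intros Hw Hnw Hu; destruct l; simpl; [apply Hw | apply Hnw]; lra. Qed.

Lemma lam_other_satl_le (lam : phase -> R -> R) l u1 u2 :
  (forall s1 s2, s1 <= s2 -> lam w s1 <= lam w s2) ->
  (forall s1 s2, s1 <= s2 -> lam nw s2 <= lam nw s1) ->
  u1 <= u2 -> lam (other l) (satl l u2) <= lam (other l) (satl l u1).
Proof. intros Hw Hnw Hu; destruct l; simpl; [apply Hnw | apply Hw]; lra. Qed.

Lemma other_other l : other (other l) = l.
Proof. destruct l; reflexivity. Qed.

(* The upwind phase: [psi l m] evaluates [psi_base] at the ordered pair [(upw x l, other (upw x l))]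
   with [x = (rho l - rho m) dz], except when [x = 0], where the flux vanishes anyway. *)
Definition upw (x : R) (l : phase) : phase := if Rlt_dec 0 x then l else other l.

Lemma upw_same_sign r x y l : 0 < x * y -> upw (r * x) l = upw (r * y) l.
Proof.
  intro Hxy; unfold upw.
  destruct (Rlt_dec 0 (r * x)), (Rlt_dec 0 (r * y)); try reflexivity; exfalso;
    assert (Hr : r <> 0) by (intro E; subst r; lra);
    assert (0 < r * x * (r * y))
      by (replace (r * x * (r * y)) with (r * r * (x * y)) by ring;
          apply Rmult_lt_0_compat; [nra | exact Hxy]);
    nra.
Qed.

Lemma scaled_convex_le x w a1 a2 b1 b2 :
  0 <= w <= 1 -> x * a1 <= x * a2 -> x * b1 <= x * b2 ->
  x * ((1 - w) * a1 + w * b1) <= x * ((1 - w) * a2 + w * b2).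
Proof. intros; nra. Qed.

Section Comparison.
Variables (z T : nat -> R) (rho : phase -> R) (g : R) (lam : phase -> R -> R) (l : phase).
Hypothesis HT : forall k, (k < 4)%nat -> 0 < T k.
Hypothesis Hlpos : forall p s, 0 < lam p s.
Hypothesis Hg : 0 < g.

Let r := rho l - rho (other l).

Lemma Gflux_upw S n :
  Gflux z T rho g lam S l n =
  g * Tb T n * (r * dz z n * psi_base z T lam S (upw (r * dz z n) l) (other (upw (r * dz z n) l)) n).
Proof.
  unfold Gflux, psi, upw; fold r.
  destruct (Rlt_dec 0 (r * dz z n)); [ring |].
  rewrite other_other.
  destruct (Rlt_dec (r * dz z n) 0); [ring |].
  assert (E : r * dz z n = 0) by lra.
  rewrite E; ring.
Qed.

Hypothesis Hz : z 0%nat - z 1%nat + z 2%nat - z 3%nat = 0.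

Lemma dz_succ_opp k : (k < 4)%nat -> dz z (k + 1) = - dz z (k + 3).
Proof. intro Hk; destruct k as [|[|[|[|k]]]]; try lia; unfold dz, vx; simpl; lra. Qed.

Lemma Gdiff_diagonal_cancel S k :
  (k < 4)%nat -> 0 < dz z k * dz z (k + 3) ->
  let c := upw (r * dz z k) l in
  let c' := upw (r * dz z (k + 3)) l in
  Gdiff z T rho g lam S l k =
  g * (Tb T k * (1 - omegaG z T k)
         * (r * dz z k * Hm (lamv lam S c k) (lamv lam S (other c) (k + 1)))
       - Tb T (k + 3) * (1 - omegaG z T (k + 3))
         * (r * dz z (k + 3) * Hm (lamv lam S c' (k + 3)) (lamv lam S (other c') k))).
Proof.
  intros Hk H3 c c'.
  assert (Ec : c' = c) by (symmetry; apply upw_same_sign, H3).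
  rewrite Ec.
  assert (H1 : ~ 0 < dz z k * dz z (k + 1)) by (rewrite dz_succ_opp by exact Hk; nra).
  pose proof (omegaG_balance z T k HT H1 H3) as Hbal.
  unfold Gdiff; rewrite !Gflux_upw, <- (upw_same_sign r _ _ l H3); fold c.
  unfold psi_base; cbv zeta.
  replace (k + 3 + 1)%nat with (k + 4)%nat by lia.
  replace (k + 3 + 2)%nat with (k + 1 + 4)%nat by lia.
  rewrite dz_add4, !lamv_add4, (Rmult_comm (dz z (k + 3)) (dz z k)).
  destruct (Rlt_dec 0 (dz z k * dz z (k + 1))); [contradiction |].
  destruct (Rlt_dec 0 (dz z k * dz z (k + 3))); [| contradiction].
  set (h3 := Hm (lamv lam S c (k + 3)) (lamv lam S (other c) (k + 1))).
  apply Rminus_diag_uniq.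
  replace (_ - _)
    with (g * r * h3 * (Tb T k * dz z k * omegaG z T k
                        - Tb T (k + 3) * dz z (k + 3) * omegaG z T (k + 3))) by ring.
  rewrite Hbal; ring.
Qed.

Variables (S1 S2 : nat -> R) (j : nat).
Hypothesis Hsame : forall v, v <> j -> S1 v = S2 v.
Hypothesis Hup : forall v, lam l (S1 v) <= lam l (S2 v).
Hypothesis Hdown : forall v, lam (other l) (S2 v) <= lam (other l) (S1 v).

Lemma weighted_Hm_le D x y : vx y <> j ->
  r * D * Hm (lamv lam S1 (upw (r * D) l) x) (lamv lam S1 (other (upw (r * D) l)) y)
  <= r * D * Hm (lamv lam S2 (upw (r * D) l) x) (lamv lam S2 (other (upw (r * D) l)) y).
Proof.
  intro Hy; unfold upw, lamv; rewrite (Hsame _ Hy).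
  destruct (Rlt_dec 0 (r * D)).
  - apply Rmult_le_compat_l; [lra |]; apply Hm_le_compat; auto; lra.
  - rewrite other_other; apply Rmult_le_compat_neg_l; [lra |].
    apply Hm_le_compat; auto; lra.
Qed.

Lemma weighted_Hm_ge D x y : vx x <> j ->
  r * D * Hm (lamv lam S2 (upw (r * D) l) x) (lamv lam S2 (other (upw (r * D) l)) y)
  <= r * D * Hm (lamv lam S1 (upw (r * D) l) x) (lamv lam S1 (other (upw (r * D) l)) y).
Proof.
  intro Hx; unfold upw, lamv; rewrite (Hsame _ Hx).
  destruct (Rlt_dec 0 (r * D)).
  - apply Rmult_le_compat_l; [lra |]; apply Hm_le_compat; auto; lra.
  - rewrite other_other; apply Rmult_le_compat_neg_l; [lra |].
    apply Hm_le_compat; auto; lra.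
Qed.

Lemma weighted_psi_base_ge n :
  ~ 0 < dz z n * dz z (n + 3) -> vx n <> j ->
  r * dz z n * psi_base z T lam S2 (upw (r * dz z n) l) (other (upw (r * dz z n) l)) n
  <= r * dz z n * psi_base z T lam S1 (upw (r * dz z n) l) (other (upw (r * dz z n) l)) n.
Proof.
  intros H3 Hn; unfold psi_base; cbv zeta.
  destruct (Rlt_dec 0 (dz z n * dz z (n + 1))).
  - apply scaled_convex_le; [apply omegaG_bounds, HT | |]; apply weighted_Hm_ge; exact Hn.
  - destruct (Rlt_dec 0 (dz z n * dz z (n + 3))); [contradiction |].
    apply weighted_Hm_ge; exact Hn.
Qed.

Lemma weighted_psi_base_le n :
  ~ 0 < dz z n * dz z (n + 1) -> vx (n + 1) <> j ->
  r * dz z n * psi_base z T lam S1 (upw (r * dz z n) l) (other (upw (r * dz z n) l)) n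
  <= r * dz z n * psi_base z T lam S2 (upw (r * dz z n) l) (other (upw (r * dz z n) l)) n.
Proof.
  intros H1 Hn; unfold psi_base; cbv zeta.
  destruct (Rlt_dec 0 (dz z n * dz z (n + 1))); [contradiction |].
  destruct (Rlt_dec 0 (dz z n * dz z (n + 3))).
  - apply scaled_convex_le; [apply omegaG_bounds, HT | |]; apply weighted_Hm_le; exact Hn.
  - apply weighted_Hm_le; exact Hn.
Qed.

Lemma Gflux_ge_of_upwind_fixed n :
  ~ 0 < dz z n * dz z (n + 3) -> vx n <> j ->
  Gflux z T rho g lam S2 l n <= Gflux z T rho g lam S1 l n.
Proof.
  intros H3 Hn; rewrite !Gflux_upw.
  apply Rmult_le_compat_l; [pose proof (Tb_pos T n HT); nra |].
  apply weighted_psi_base_ge; assumption.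
Qed.

Lemma Gflux_le_of_downwind_fixed n :
  ~ 0 < dz z n * dz z (n + 1) -> vx (n + 1) <> j ->
  Gflux z T rho g lam S1 l n <= Gflux z T rho g lam S2 l n.
Proof.
  intros H1 Hn; rewrite !Gflux_upw.
  apply Rmult_le_compat_l; [pose proof (Tb_pos T n HT); nra |].
  apply weighted_psi_base_le; assumption.
Qed.

Lemma Gdiff_le k : (k < 4)%nat -> j <> k ->
  Gdiff z T rho g lam S2 l k <= Gdiff z T rho g lam S1 l k.
Proof.
  intros Hk Hjk.
  assert (Hvk : vx k <> j) by (rewrite vx_id by exact Hk; auto).
  destruct (Rlt_dec 0 (dz z k * dz z (k + 3))) as [H3 | H3].
  - rewrite !Gdiff_diagonal_cancel by assumption; cbv zeta.
    apply Rmult_le_compat_l; [lra |].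
    pose proof (Tb_pos T k HT); pose proof (Tb_pos T (k + 3) HT).
    pose proof (omegaG_bounds z T k HT); pose proof (omegaG_bounds z T (k + 3) HT).
    apply Rplus_le_compat; [| apply Ropp_le_contravar];
      apply Rmult_le_compat_l; try (apply Rmult_le_pos; lra).
    + apply weighted_Hm_ge; exact Hvk.
    + apply weighted_Hm_le; exact Hvk.
  - assert (Hk4 : (k + 3 + 1 = k + 4)%nat) by lia.
    assert (Gflux z T rho g lam S2 l k <= Gflux z T rho g lam S1 l k)
      by (apply Gflux_ge_of_upwind_fixed; assumption).
    assert (Gflux z T rho g lam S1 l (k + 3) <= Gflux z T rho g lam S2 l (k + 3)).
    { apply Gflux_le_of_downwind_fixed; rewrite Hk4.
      - rewrite dz_add4, Rmult_comm; exact H3.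
      - rewrite vx_add4; exact Hvk. }
    unfold Gdiff; lra.
Qed.

End Comparison.

Lemma upd_neq S j t v : v <> j -> upd S j t v = S v.
Proof. intro Hv; unfold upd; rewrite (proj2 (Nat.eqb_neq v j) Hv); reflexivity. Qed.

Theorem mainTheorem5
  (z T : nat -> R) (rho : phase -> R) (g : R) (lam : phase -> R -> R)
  (S : nat -> R)
  (Hg : 0 < g)
  (HT : forall k, (k < 4)%nat -> 0 < T k)
  (Hlpos : forall l s, 0 < lam l s)
  (Hlder : forall l, derivable (lam l))
  (Hwmono : forall s1 s2, s1 <= s2 -> lam w s1 <= lam w s2)
  (Hnwmono : forall s1 s2, s1 <= s2 -> lam nw s2 <= lam nw s1)
  (Hz : z 0%nat - z 1%nat + z 2%nat - z 3%nat = 0)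
  (l : phase) (k j : nat) (Hk : (k < 4)%nat) (Hj : (j < 4)%nat) (Hjk : j <> k) :
  exists D : R,
    derivable_pt_lim
      (fun u => Gdiff z T rho g lam (upd S j (satl l u)) l k)
      (satl l (S j)) D
    /\ D <= 0.
Proof.
  set (f := fun u => Gdiff z T rho g lam (upd S j (satl l u)) l k).
  assert (Hf : derivable f) by (apply derivable_Gdiff_upd; assumption).
  assert (Hanti : forall u1 u2, u1 <= u2 -> f u2 <= f u1).
  { intros u1 u2 Hu; unfold f.
    apply (Gdiff_le z T rho g lam l HT Hlpos Hg Hz _ _ j); try assumption.
    - intros v Hv; rewrite !upd_neq by exact Hv; reflexivity.
    - intro v; unfold upd; destruct (Nat.eqb v j); [apply lam_satl_le | lra]; assumption.
    - intro v; unfold upd; destruct (Nat.eqb v j); [apply lam_other_satl_le | lra]; assumption. }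
  exists (derive_pt f (satl l (S j)) (Hf (satl l (S j)))); split.
  - apply derive_pt_eq_1 with (Hf (satl l (S j))); reflexivity.
  - apply nonpos_derivative_0; exact Hanti.
Qed.
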